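(* Let $R:X\leftrightarrow\mathcal{P}Y$ and $S:Y\leftrightarrow\mathcal{P}Z$ be multirelations. Then (1) $(R\ast S)^{\downarrow}=R\ast S^{\downarrow}$, and hence $(R^{\downarrow}\ast S^{\downarrow})^{\downarrow}=R^{\downarrow}\ast S^{\downarrow}$; (2) if $R$ is inner deterministic, then $(R\ast S)^{\uparrow}=R\ast S^{\uparrow}=R^{\uparrow}\ast S^{\uparrow}$.
   Context: A multirelation $R:X\leftrightarrow\mathcal{P}Y$ is a subset of $X\times\mathcal{P}(Y)$. $R^{\uparrow}=\{(a,A)\mid\exists B.\ (a,B)\in R\wedge B\subseteq A\}$, $R^{\downarrow}=\{(a,A)\mid\exists B.\ (a,B)\in R\wedge A\subseteq B\}$. $R$ is inner deterministic if every $(a,B)\in R$ has $B$ a singleton. The Peleg composition is $R\ast S=\{(a,C)\mid\exists B.\ (a,B)\in R\wedge\exists f:Y\to\mathcal{P}Z.\ (\forall b\in B.\ (b,f(b))\in S)\wedge C=\bigcup_{b\in B}f(b)\}$. *)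

From mathcomp Require Import all_boot.
From mathcomp Require Import boolp classical_sets.
Set Implicit Arguments. Unset Strict Implicit. Unset Printing Implicit Defensive.
Local Open Scope classical_set_scope.

Definition multirel (X Y : Type) := set (X * set Y).

Definition up_close X Y (R : multirel X Y) : multirel X Y :=
  [set p | exists B, R (p.1, B) /\ B `<=` p.2].

Definition down_close X Y (R : multirel X Y) : multirel X Y :=
  [set p | exists B, R (p.1, B) /\ p.2 `<=` B].

Definition inner_det X Y (R : multirel X Y) : Prop :=
  forall a B, R (a, B) -> exists b, B = [set b].

Definition peleg X Y Z (R : multirel X Y) (S : multirel Y Z) : multirel X Z :=
  [set p | exists B, R (p.1, B) /\
     exists f : Y -> set Z, (forall b, B b -> S (b, f b)) /\
                            p.2 = \bigcup_(b in B) f b].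

(** A subset [C] of [\bigcup_(b in B) f b] is the Peleg image of the traces
  [f b `&` C], which gives the lower closure law; the converse inclusion picks,
  by choice, [S]-images above the chosen [down_close S]-images.  For the upper
  closure, [peleg (up_close R) (up_close S)] is always below
  [up_close (peleg R S)], and when every image set of [R] is nonempty (as for
  an inner deterministic [R]) a superset [C] of a Peleg image is again one,
  through the enlarged family [fun b => f b `|` C]; the three multirelations
  of part (2) thus form a cycle of inclusions. *)
From mathcomp Require Import all_boot.
From mathcomp Require Import boolp classical_sets.
Local Open Scope classical_set_scope.

Lemma choice_on {T U : Type} {A : set T} (P : T -> set U -> Prop) :
  (forall t, A t -> exists F, P t F) ->
  exists f : T -> set U, forall t, A t -> P t (f t).
Proof.
move=> AP; have /choice[f Pf] : forall t, exists F, A t -> P t F.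
  move=> t; have [/AP[F PF]|nAt] := pselect (A t).
    by exists F.
  by exists set0 => /nAt.
by exists f.
Qed.

Section Closures.
Context {X Y : Type}.
Implicit Types R : multirel X Y.

Lemma sub_up_close R : R `<=` up_close R.
Proof. by move=> [a B] RB; exists B; split. Qed.

Lemma down_closeK R : down_close (down_close R) = down_close R.
Proof.
apply/seteqP; split => -[a C] /=.
- by move=> [D [[B [RB DB]] CD]]; exists B; split => //; apply: subset_trans DB.
- by move=> [B [RB CB]]; exists C; split => //; exists B.
Qed.

Lemma inner_det_neq0 R : inner_det R -> forall a B, R (a, B) -> B !=set0.
Proof. by move=> Rdet a B /Rdet[b ->]; exists b. Qed.

End Closures.

Section PelegComposition.
Context {X Y Z : Type}.
Implicit Types (R : multirel X Y) (S : multirel Y Z).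

Lemma peleg_subl R1 R2 S : R1 `<=` R2 -> peleg R1 S `<=` peleg R2 S.
Proof. by move=> R12 [a C] [B [RB fB]]; exists B; split => //; apply: R12. Qed.

Lemma down_close_peleg R S : down_close (peleg R S) = peleg R (down_close S).
Proof.
apply/seteqP; split => -[a C] /=.
- move=> [D [[B [RB [f [Sf /= ->]]]] CfB]].
  exists B; split => //; exists (fun b => f b `&` C); split.
    by move=> b Bb; exists (f b); split; [exact: Sf | exact: subIsetl].
  by rewrite -setI_bigcupl setIidr.
- move=> [B [RB [g [Sg /= ->]]]].
  have [F SF] := choice_on (fun b F => S (b, F) /\ g b `<=` F) Sg.
  exists (\bigcup_(b in B) F b); split.
    by exists B; split => //; exists F; split => // b /SF[].
  by apply: subset_bigcup => b /SF[].
Qed.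

Lemma peleg_up_close_sub R S :
  peleg (up_close R) (up_close S) `<=` up_close (peleg R S).
Proof.
move=> [a C] [A [[B [RB BA]] [g [Sg /= ->]]]].
have [F SF] := choice_on (fun b F => S (b, F) /\ F `<=` g b)
  (fun b Bb => Sg b (BA b Bb)).
exists (\bigcup_(b in B) F b); split.
  by exists B; split => //; exists F; split => // b /SF[].
apply: (@subset_trans _ (\bigcup_(b in B) g b)); last exact: bigcup_subset.
by apply: subset_bigcup => b /SF[].
Qed.

Lemma up_close_peleg_sub R S : (forall a B, R (a, B) -> B !=set0) ->
  up_close (peleg R S) `<=` peleg R (up_close S).
Proof.
move=> R_neq0 [a C] [D [[B [RB [f [Sf /= ->]]]] fBC]].
exists B; split => //; exists (fun b => f b `|` C); split.
  by move=> b Bb; exists (f b); split; [exact: Sf | exact: subsetUl].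
by rewrite /= bigcupUl ?setUidr //; apply: R_neq0 RB.
Qed.

End PelegComposition.

Theorem lemma4p8 (X Y Z : Type) (R : multirel X Y) (S : multirel Y Z) :
  (down_close (peleg R S) = peleg R (down_close S) /\
   down_close (peleg (down_close R) (down_close S))
     = peleg (down_close R) (down_close S)) /\
  (inner_det R ->
     up_close (peleg R S) = peleg R (up_close S) /\
     peleg R (up_close S) = peleg (up_close R) (up_close S)).
Proof.
split.
  split; first exact: down_close_peleg.
  by rewrite down_close_peleg down_closeK.
move=> /inner_det_neq0 R_neq0.
have up_RS := up_close_peleg_sub R S R_neq0.
have RupS := peleg_subl R (up_close R) (up_close S) (sub_up_close R).
have upRupS := peleg_up_close_sub R S.
split; apply/seteqP; split => //.
- exact: subset_trans RupS upRupS.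
- exact: subset_trans upRupS up_RS.
Qed.
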